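(* Let $k\ge 3$, let $n_1,\dots,n_k$ be positive integers, and let $X=\nu(\mathbb{P}^{n_1}\times\cdots\times\mathbb{P}^{n_k})\subset\mathbb{P}^M$ be the Segre variety of $k$ factors. Then for each integer $x\in\{3,\dots,k-1\}$ there exists $p\in\sigma_3(X)\setminus\sigma_2(X)$ with $r_X(p)=x$.
   Context: Work over an algebraically closed field $K$. $\nu:\mathbb{P}^{n_1}\times\cdots\times\mathbb{P}^{n_k}\to\mathbb{P}^M$, $M=\prod_{i=1}^k(n_i+1)-1$, is the Segre embedding (given by $|\mathcal{O}(1,\dots,1)|$), and $X$ is its image. The $s$-th secant variety $\sigma_s(X)$ is the Zariski closure of the union of all linear spaces $\mathbb{P}^{s-1}$ spanned by $s$ points of $X$. The $X$-rank $r_X(p)$ of $p\in\mathbb{P}^M$ is the minimal $s$ such that $p$ lies in the linear span of $s$ points of $X$. *)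

From HB Require Import structures.
From mathcomp Require Import all_boot all_order all_algebra.
Set Implicit Arguments. Unset Strict Implicit. Unset Printing Implicit Defensive.
Import GRing.Theory.
Local Open Scope ring_scope.

(* Homogeneous coordinates of
   P^M (M = prod (n_i+1) - 1) are indexed by such multi-indices. *)
Definition midx (k : nat) (n : 'I_k -> nat) : finType :=
  {dffun forall i : 'I_k, 'I_(n i).+1}.

(* Vectors of K^(M+1) (affine cone over P^M): tensors. *)
Definition tensor (K : closedFieldType) (k : nat) (n : 'I_k -> nat) :=
  midx n -> K.

(* Sum of s (decomposable) tensors v_a(0) (x) ... (x) v_a(k-1), each factor
   nonzero: exactly the affine cones over linear spans of s points of the
   Segre variety X (the coefficients of the span are absorbed into the
   factors; a zero coefficient is allowed by letting the term be absent,
   which we encode by allowing a scalar c_a). *)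
Definition in_span_of_points (K : closedFieldType) (k : nat) (n : 'I_k -> nat)
    (s : nat) (T : tensor K n) : Prop :=
  exists (c : 'I_s -> K) (v : 'I_s -> forall i : 'I_k, 'I_(n i).+1 -> K),
    (forall a i, exists t, v a i t != 0) /\
    forall j : midx n, T j = \sum_(a < s) c a * \prod_(i < k) v a i (j i).

Definition X_rank (K : closedFieldType) (k : nat) (n : 'I_k -> nat)
    (T : tensor K n) (x : nat) : Prop :=
  in_span_of_points x T /\ forall s, in_span_of_points s T -> (x <= s)%N.

Inductive pexpr (K : closedFieldType) (J : Type) : Type :=
| PVar of J
| PConst of K
| PAdd of pexpr K J & pexpr K J
| PMul of pexpr K J & pexpr K J.

Fixpoint peval (K : closedFieldType) (J : Type) (e : pexpr K J) (T : J -> K) : K :=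
  match e with
  | PVar j => T j
  | PConst c => c
  | PAdd e1 e2 => peval e1 T + peval e2 T
  | PMul e1 e2 => peval e1 T * peval e2 T
  end.

(* Zariski closure: T lies in the closure of S iff every polynomial vanishing
   on S vanishes at T.  (For cones S this is the affine cone over the
   projective Zariski closure.) *)
Definition zariski_closure (K : closedFieldType) (J : Type) (S : (J -> K) -> Prop)
    (T : J -> K) : Prop :=
  forall e : pexpr K J, (forall U, S U -> peval e U = 0) -> peval e T = 0.

(* Affine cone over the s-th secant variety sigma_s(X). *)
Definition secant (K : closedFieldType) (k : nat) (n : 'I_k -> nat) (s : nat)
    (T : tensor K n) : Prop :=
  zariski_closure (fun U : tensor K n => in_span_of_points s U) T.

(* The witness of X-rank [x] is [T = W_S + e_R]: the W-state [\sum_(i in S) e_{i}] on a set [S] of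
   [x - 1] factors, plus the tensor [e_R] with factor [e_1] exactly on the complement [R] of [S].
   - It is a sum of [x] points, and no fewer suffice: a factorwise linear map that annihilates the
     [i]-th factor of one term of a decomposition ([i] in [S]) turns [W_S] into a multiple of
     [W_(S :\ i)] (plus a multiple of [e_0^{(x) k}]) and removes that term, so induction on [|S|].
   - It lies in [sigma_3], being the limit of
     [t^-1 ((e_0 + t e_1)^{(x) S} (x) e_0^{(x) R} - e_0^{(x) k}) + e_R] as [t] tends to 0.
   - It is not in [sigma_2], since a 3 x 3 minor of its flattening along two factors, one in [S]
     and one in [R], equals 1, while all such minors vanish on [sigma_2]. *)

From mathcomp Require Import all_boot all_order all_algebra.
From mathcomp Require Import perm ring zify.
Set Implicit Arguments. Unset Strict Implicit. Unset Printing Implicit Defensive.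
Import GRing.Theory.
Local Open Scope ring_scope.

Lemma setD1_notin (T : finType) (A : {set T}) x : x \notin A -> A :\ x = A.
Proof. by move=> xA; apply/setDidPl; rewrite disjoint_sym disjoints1. Qed.

Fixpoint peval_poly (K : closedFieldType) (J : Type) (e : pexpr K J) (P : J -> {poly K}) :
    {poly K} :=
  match e with
  | PVar j => P j
  | PConst c => c%:P
  | PAdd e1 e2 => peval_poly e1 P + peval_poly e2 P
  | PMul e1 e2 => peval_poly e1 P * peval_poly e2 P
  end.

Lemma horner_peval_poly (K : closedFieldType) (J : Type) (e : pexpr K J) P t :
  (peval_poly e P).[t] = peval e (fun j => (P j).[t]).
Proof.
by elim: e => //= [c|e1 IH1 e2 IH2|e1 IH1 e2 IH2]; rewrite ?hornerC ?hornerD ?hornerM ?IH1 ?IH2.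
Qed.

Lemma peval_ext (K : closedFieldType) (J : Type) (e : pexpr K J) (T T' : J -> K) :
  T =1 T' -> peval e T = peval e T'.
Proof. by move=> TT'; elim: e => [j|c|e1 IH1 e2 IH2|e1 IH1 e2 IH2] /=; rewrite ?TT' ?IH1 ?IH2. Qed.

(* A polynomial [q] vanishing on the punctured line vanishes at 0: otherwise ['X * q + 1]
   would be a nonconstant polynomial without roots. *)
Lemma zariski_closure_curve (K : closedFieldType) (J : Type) (S : (J -> K) -> Prop)
    (P : J -> {poly K}) (T : J -> K) :
  (forall j, T j = (P j).[0]) -> (forall t, t != 0 -> S (fun j => (P j).[t])) ->
  zariski_closure S T.
Proof.
move=> TE curveS e eS; rewrite (peval_ext e TE) -horner_peval_poly.
set q := peval_poly e P.
have q_punct t : t != 0 -> q.[t] = 0 by move=> t_nz; rewrite horner_peval_poly; apply/eS/curveS.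
have [->|q_nz] := eqVneq q 0; first by rewrite horner0.
have : size ('X * q + 1) != 1%N.
  rewrite size_polyDl mulrC size_mulX //; first by rewrite eqSS -lt0n size_poly_gt0.
  by rewrite size_polyC oner_neq0 ltnS size_poly_gt0.
move/closed_rootP => [t /rootP]; rewrite hornerD hornerM hornerX hornerC.
have [->|t_nz] := eqVneq t 0; first by rewrite mul0r add0r => /eqP; rewrite oner_eq0.
by rewrite (q_punct t t_nz) mulr0 add0r => /eqP; rewrite oner_eq0.
Qed.

Lemma prod_linear_expand (R : comNzRingType) (I : eqType) (x y : I -> R) (r : seq I) :
  uniq r -> exists q : {poly R},
  \prod_(i <- r) ((x i)%:P + 'X * (y i)%:P) =
  (\prod_(i <- r) x i)%:P + 'X * ((\sum_(i <- r) y i * \prod_(i' <- rem i r) x i')%:P + 'X * q).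
Proof.
elim: r => [_|a r IHr] /=; first by exists 0; rewrite !big_nil mulr0 addr0 mulr0 addr0.
case/andP=> ar r_uniq; have [q qE] := IHr r_uniq.
set d := \sum_(i <- r) y i * \prod_(i' <- rem i r) x i'.
have -> : \sum_(i <- a :: r) y i * \prod_(i' <- rem i (a :: r)) x i' =
          y a * \prod_(i <- r) x i + x a * d.
  rewrite big_cons /= eqxx /d mulr_sumr; congr (_ + _); rewrite big_seq_cond [RHS]big_seq_cond.
  apply: eq_bigr => i /andP[ir _]; have /negbTE-> : a != i by apply: contraNneq ar => ->.
  by rewrite big_cons mulrCA.
exists ((x a)%:P * q + (y a)%:P * (d%:P + 'X * q)).
rewrite !big_cons qE !polyCD !polyCM; ring.
Qed.

Definition pdet (K : closedFieldType) (J : Type) p (M : 'I_p -> 'I_p -> pexpr K J) : pexpr K J :=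
  \big[@PAdd K J/PConst J 0]_(s : 'S_p)
    PMul (PConst J ((-1) ^+ s)) (\big[@PMul K J/PConst J 1]_i M i (s i)).

Lemma peval_pdet (K : closedFieldType) (J : Type) p (M : 'I_p -> 'I_p -> pexpr K J) U :
  peval (pdet M) U = \det (\matrix_(a, b) peval (M a b) U).
Proof.
rewrite /pdet (big_morph (fun e => peval e U) (id1 := 0) (op1 := +%R)) //.
apply: eq_bigr => s _ /=; rewrite (big_morph (fun e => peval e U) (id1 := 1) (op1 := *%R)) //.
by congr (_ * _); apply: eq_bigr => i _; rewrite mxE.
Qed.

Section Segre.
Variables (K : closedFieldType) (k : nat) (n : 'I_k -> nat).
Hypothesis n_gt0 : forall i, (0 < n i)%N.
Implicit Types (S R U V W : {set 'I_k}) (T : tensor K n) (j : midx n).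

Lemma span_ext s T T' : T =1 T' -> in_span_of_points s T -> in_span_of_points s T'.
Proof. by move=> eqT [c [v [v_nz TE]]]; exists c, v; split=> // j; rewrite -eqT. Qed.

Lemma span_add s t T1 T2 :
  in_span_of_points s T1 -> in_span_of_points t T2 ->
  in_span_of_points (s + t) (fun j => T1 j + T2 j).
Proof.
move=> [c1 [v1 [v1_nz T1E]]] [c2 [v2 [v2_nz T2E]]].
pose glue X (f1 : 'I_s -> X) (f2 : 'I_t -> X) a :=
  match split a with inl a1 => f1 a1 | inr a2 => f2 a2 end.
exists (glue _ c1 c2), (glue _ v1 v2); split.
  by move=> a i; rewrite /glue; case: (split a) => b; [apply: v1_nz | apply: v2_nz].
move=> j; rewrite T1E T2E big_split_ord /glue.
by congr (_ + _); apply: eq_bigr => a _; rewrite ?(unsplitK (inl _)) ?(unsplitK (inr _)).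
Qed.

Lemma span_scaleK s T (al : K) :
  al != 0 -> in_span_of_points s (fun j => al * T j) -> in_span_of_points s T.
Proof.
move=> al_nz [c [v [v_nz alTE]]]; exists (fun a => al^-1 * c a), v; split=> // j.
under eq_bigr do rewrite -mulrA.
by rewrite -mulr_sumr -alTE mulKf.
Qed.

Lemma span_drop s T (c : 'I_s.+1 -> K) (v : 'I_s.+1 -> forall i, 'I_(n i).+1 -> K) a0 :
  (forall a i, exists t, v a i t != 0) ->
  (forall j, T j = \sum_(a < s.+1) c a * \prod_i v a i (j i)) ->
  c a0 = 0 -> in_span_of_points s T.
Proof.
move=> v_nz TE ca0; exists (c \o lift a0), (v \o lift a0); split=> [a i|j]; first exact: v_nz.
by rewrite TE (bigD1_ord a0) //= ca0 mul0r add0r.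
Qed.

Lemma span_sum (I : Type) (r : seq I) (F : I -> tensor K n) :
  (forall i, in_span_of_points 1 (F i)) ->
  in_span_of_points (size r) (fun j => \sum_(i <- r) F i j).
Proof.
move=> F1; elim: r => [|i r IHr] /=.
  by exists (fun _ => 0), (fun _ _ _ => 0); split=> [[]|j] //; rewrite big_nil big_ord0.
by rewrite -add1n; apply: span_ext (span_add (F1 i) IHr) => j; rewrite big_cons.
Qed.

(* [pattern_tensor U] is [e_U], the decomposable tensor with factor [e_1] at the positions in [U]
   and [e_0] elsewhere; [pattern_idx U] is its only nonzero coordinate. *)
Definition pattern_idx U : midx n := [ffun i => inord (i \in U)].

Definition pattern_tensor U : tensor K n :=
  fun j => \prod_i ((j i : nat) == (i \in U))%:R.

Lemma pattern_idxE U i : (pattern_idx U i : nat) = (i \in U).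
Proof. by rewrite ffunE inordK // ltnS; case: (i \in U); rewrite ?n_gt0. Qed.

Lemma pattern_tensor_idx V W : pattern_tensor V (pattern_idx W) = (V == W)%:R.
Proof.
rewrite /pattern_tensor; under eq_bigr do rewrite pattern_idxE.
case: (pickP [pred i | (i \in V) != (i \in W)]) => [i /= VWi | VW].
  rewrite (bigD1 i) //=.
  have -> : (V == W) = false by apply: contraNF VWi => /eqP->.
  by move: VWi; case: (i \in V); case: (i \in W); rewrite ?mul0r.
have VW' : V = W by apply/setP => i; move/negbFE/eqP: (VW i).
by rewrite VW' eqxx big1 // => i _; rewrite eqxx.
Qed.

Lemma span_pattern_tensor U : in_span_of_points 1 (pattern_tensor U).
Proof.
exists (fun _ => 1), (fun _ i (u : 'I_(n i).+1) => ((u : nat) == (i \in U))%:R); split.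
  by move=> _ i; exists (pattern_idx U i); rewrite pattern_idxE eqxx oner_neq0.
by move=> j; rewrite big_ord1 mul1r.
Qed.

(* The W-state on [S] plus [mu e_R]; the [lam e_0^{(x) k}] term is created by contractions. *)
Definition wtensor S R (lam mu : K) : tensor K n := fun j =>
  \sum_(i in S) pattern_tensor [set i] j + lam * pattern_tensor set0 j + mu * pattern_tensor R j.

Lemma wtensor_idx S R lam mu W :
  wtensor S R lam mu (pattern_idx W) =
  \sum_(i in S) ([set i] == W)%:R + lam * (set0 == W)%:R + mu * (R == W)%:R.
Proof. by rewrite /wtensor !pattern_tensor_idx; under eq_bigr do rewrite pattern_tensor_idx. Qed.

Lemma wtensor_idx_set1 S R lam mu i : [disjoint S & R] -> i \in S ->
  wtensor S R lam mu (pattern_idx [set i]) = 1.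
Proof.
move=> SR iS; rewrite wtensor_idx (big_setD1 i iS) /= eqxx big1 => [|i' /setD1P[i'i _]].
  have -> : (set0 == [set i]) = false by apply: contraTF (set11 i) => /eqP<-; rewrite inE.
  have -> : (R == [set i]) = false.
    by apply: contraTF iS => /eqP Ri; rewrite (disjointFl SR) // Ri set11.
  by rewrite !mulr0 !addr0.
by rewrite (inj_eq set1_inj) (negbTE i'i).
Qed.

Lemma wtensor_idx_R S R lam mu r0 : [disjoint S & R] -> r0 \in R ->
  wtensor S R lam mu (pattern_idx R) = mu.
Proof.
move=> SR r0R; rewrite wtensor_idx eqxx big1 => [|i iS].
  have -> : (set0 == R) = false by apply: contraTF r0R => /eqP<-; rewrite inE.
  by rewrite mulr0 mulr1 !add0r.
suff -> : ([set i] == R) = false by [].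
by apply: contraTF iS => /eqP Ri; rewrite (disjointFl SR) // -Ri set11.
Qed.

Lemma wtensor_idx_eq0 S R W : R != W -> ~~ ((W \subset S) && (#|W| == 1%N)) ->
  wtensor S R 0 1 (pattern_idx W) = 0.
Proof.
move=> RW not_single; rewrite wtensor_idx (negbTE RW) mul0r mulr0 !addr0 big1 // => i iS.
suff -> : ([set i] == W) = false by [].
by apply: contraNF not_single => /eqP<-; rewrite sub1set iS cards1.
Qed.

Lemma span_wtensor S R : in_span_of_points #|S|.+1 (wtensor S R 0 1).
Proof.
have := span_add (span_sum (enum S) (fun i => span_pattern_tensor [set i])) (span_pattern_tensor R).
rewrite addn1 -cardE; apply: span_ext => j.
by rewrite /wtensor big_enum mul0r addr0 mul1r.
Qed.

Definition update_idx (j : midx n) i t : midx n :=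
  [ffun i' => if i' == i then inord t else j i'].

(* Applies [v |-> (al v_0 + be v_1) e_0] to the [i]-th factor. *)
Definition contract i (al be : K) T : tensor K n := fun j =>
  ((j i : nat) == 0)%:R * (al * T (update_idx j i 0) + be * T (update_idx j i 1)).

Lemma prod_update (f : forall i, 'I_(n i).+1 -> K) j i t :
  \prod_i' f i' (update_idx j i t i') = f i (inord t) * \prod_(i' | i' != i) f i' (j i').
Proof.
rewrite (bigD1 i) //= ffunE eqxx; congr (_ * _).
by apply: eq_bigr => i' /negbTE i'i; rewrite ffunE i'i.
Qed.

Lemma span_contract s T c v a0 i (al be : K) :
  (forall a i, exists t, v a i t != 0) ->
  (forall j, T j = \sum_(a < s.+1) c a * \prod_i v a i (j i)) ->
  al * v a0 i (inord 0) + be * v a0 i (inord 1) = 0 ->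
  in_span_of_points s (contract i al be T).
Proof.
move=> v_nz TE a0_killed.
pose w a i' (t : 'I_(n i').+1) := if i' == i then ((t : nat) == 0)%:R else v a i' t.
pose c' a := c a * (al * v a i (inord 0) + be * v a i (inord 1)).
apply: (span_drop (c := c') (v := w) (a0 := a0)).
- move=> a i'; rewrite /w; case: (i' == i); last exact: v_nz.
  by exists ord0; rewrite oner_neq0.
- move=> j; rewrite /contract !TE !mulr_sumr -big_split mulr_sumr.
  apply: eq_bigr => a _; rewrite !prod_update [in RHS](bigD1 i) //= /c' /w eqxx.
  rewrite [in RHS](eq_bigr (fun i' => v a i' (j i'))) => [|i' /negbTE -> //]; ring.
- by rewrite /c' a0_killed mulr0.
Qed.

Lemma pattern_tensor_update U j i t : (j i : nat) = 0 -> (t <= 1)%N ->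
  pattern_tensor U (update_idx j i t) = (t == (i \in U))%:R * pattern_tensor (U :\ i) j.
Proof.
move=> ji0 t_le1; rewrite /pattern_tensor.
rewrite (prod_update (fun i' (u : 'I_(n i').+1) => ((u : nat) == (i' \in U))%:R)).
rewrite inordK; last by apply: leq_ltn_trans t_le1 _; rewrite ltnS.
rewrite [in RHS](bigD1 i) //= ji0 !inE eqxx mul1r.
by congr (_ * _); apply: eq_bigr => i' i'i; rewrite !inE i'i.
Qed.

Lemma pattern_tensor_eq0 U j i : i \notin U -> (j i : nat) != 0 -> pattern_tensor U j = 0.
Proof. by move=> iU ji; rewrite /pattern_tensor (bigD1 i) //= (negbTE iU) (negbTE ji) mul0r. Qed.

Lemma contract_wtensor S R lam mu (al be : K) i j : i \in S -> i \notin R -> al != 0 ->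
  contract i al (- be) (wtensor S R lam mu) j = al * wtensor (S :\ i) R (lam - be / al) mu j.
Proof.
move=> iS iR al_nz; rewrite /contract /wtensor.
have [ji0|ji_nz] := eqVneq (j i : nat) 0; last first.
  rewrite mul0r !(pattern_tensor_eq0 _ ji_nz) ?inE //.
  rewrite big1 ?(mulr0, addr0) // => i' /setD1P[i'i _].
  by rewrite (pattern_tensor_eq0 _ ji_nz) // inE eq_sym.
have sum_update t : (t <= 1)%N -> \sum_(i' in S :\ i) pattern_tensor [set i'] (update_idx j i t) =
    (t == 0)%:R * \sum_(i' in S :\ i) pattern_tensor [set i'] j.
  move=> t_le1; rewrite mulr_sumr; apply: eq_bigr => i' /setD1P[i'i _].
  by rewrite pattern_tensor_update // inE (eq_sym i) (negbTE i'i) setD1_notin // inE eq_sym.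
rewrite mul1r !(big_setD1 i iS) /= !pattern_tensor_update // !sum_update //.
rewrite !inE eqxx (negbTE iR) setDv set0D (setD1_notin iR) /=.
by field.
Qed.

Lemma term_factor_nz s T c v j i :
  (forall j, T j = \sum_(a < s) c a * \prod_i v a i (j i)) -> T j != 0 ->
  exists a, v a i (j i) != 0.
Proof.
move=> TE Tj_nz; apply/existsP; apply: contraNT Tj_nz => /existsPn v0.
by rewrite TE big1 // => a _; rewrite (bigD1 i) //= (eqP (negbNE (v0 a))) mul0r mulr0.
Qed.

Lemma wtensor_span_lt s S R lam mu r0 : r0 \in R -> mu != 0 -> [disjoint S & R] ->
  in_span_of_points s (wtensor S R lam mu) -> (#|S| < s)%N.
Proof.
move=> r0R mu_nz; elim: s S lam => [|s IHs] S lam SR [c [v [v_nz TE]]].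
  move: (TE (pattern_idx R)); rewrite big_ord0 (wtensor_idx_R _ _ SR r0R).
  by move/eqP; rewrite (negbTE mu_nz).
have [->|[i iS]] := set_0Vmem S; first by rewrite cards0.
have iR : i \notin R by rewrite (disjointFr SR).
have [a0] : exists a, v a i (pattern_idx [set i] i) != 0.
  by apply: (term_factor_nz i TE); rewrite wtensor_idx_set1 ?oner_neq0.
rewrite ffunE set11 => va0.
set al := v a0 i (inord 1); set be := v a0 i (inord 0).
have : in_span_of_points s (contract i al (- be) (wtensor S R lam mu)).
  by apply: (span_contract v_nz TE (a0 := a0)); rewrite /al /be; ring.
move/(span_ext (fun j => contract_wtensor lam mu be j iS iR va0))/(span_scaleK va0).
by move/(IHs _ _ (disjointWl (subD1set S i) SR)); rewrite (cardsD1 i S) iS.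
Qed.

Lemma X_rank_wtensor S r0 : r0 \notin S -> X_rank (wtensor S (~: S) 0 1) #|S|.+1.
Proof.
move=> r0S; split=> [|s]; first exact: span_wtensor.
by apply: (wtensor_span_lt (r0 := r0)); rewrite ?inE ?oner_neq0 // disjoints_subset setCK.
Qed.

Lemma secant3_wtensor S R : secant 3 (wtensor S R 0 1).
Proof.
pose x (u : nat) : K := (u == 0)%:R.
pose y i (u : nat) : K := ((u == 1) && (i \in S))%:R.
pose lin j : {poly K} := \prod_i ((x (j i))%:P + 'X * (y i (j i))%:P).
pose Q j := (lin j - (pattern_tensor set0 j)%:P) %/ 'X.
have linE j : lin j = (pattern_tensor set0 j)%:P + 'X * Q j /\
              (Q j).[0] = \sum_(i in S) pattern_tensor [set i] j.
  have [q qE] := prod_linear_expand (fun i => x (j i)) (fun i => y i (j i)) (index_enum_uniq 'I_k).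
  have e0E : \prod_(i <- index_enum 'I_k) x (j i) = pattern_tensor set0 j.
    by apply: eq_bigr => i _; rewrite in_set0.
  have wE : \sum_(i <- index_enum 'I_k) y i (j i) * \prod_(i' <- rem i (index_enum 'I_k)) x (j i') =
            \sum_(i in S) pattern_tensor [set i] j.
    rewrite [RHS]big_mkcond /= big_seq [RHS]big_seq; apply: eq_bigr => i ik.
    rewrite /y /pattern_tensor (big_rem i ik) /= inE eqxx.
    case: (i \in S); last by rewrite andbF mul0r.
    rewrite andbT; congr (_ * _); rewrite big_seq [RHS]big_seq; apply: eq_bigr => i'.
    by rewrite mem_rem_uniq ?index_enum_uniq // !inE => /andP[/negbTE-> _].
  have QE : Q j = (\sum_(i in S) pattern_tensor [set i] j)%:P + 'X * q.
    by rewrite /Q /lin qE e0E wE addrAC subrr add0r mulKp ?polyX_eq0.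
  by rewrite QE /lin qE e0E wE; split=> //; rewrite !hornerE.
apply: (zariski_closure_curve (P := fun j => Q j + (pattern_tensor R j)%:P)) => [j|t t_nz].
  by have [_ Q0] := linE j; rewrite hornerD Q0 hornerC /wtensor mul0r addr0 mul1r.
pose c (a : 'I_3) := if a == 0 :> nat then t^-1 else if a == 1 :> nat then - t^-1 else 1.
pose v (a : 'I_3) i (u : 'I_(n i).+1) :=
  if a == 0 :> nat then x u + t * y i u
  else if a == 1 :> nat then x u else ((u : nat) == (i \in R))%:R.
exists c, v; split=> [a i|j].
  rewrite /v; case: (a == 0 :> nat); first by exists ord0; rewrite /x /y /= mulr0 addr0 oner_neq0.
  case: (a == 1 :> nat); first by exists ord0; rewrite /x oner_neq0.
  by exists (pattern_idx R i); rewrite pattern_idxE eqxx oner_neq0.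
have [linjE _] := linE j.
have lintE : (lin j).[t] = \prod_i (x (j i) + t * y i (j i)).
  by rewrite horner_prod; apply: eq_bigr => i _; rewrite !hornerE.
have e0E : pattern_tensor set0 j = \prod_i x (j i) by apply: eq_bigr => i _; rewrite in_set0.
have QtE : (Q j).[t] = t^-1 * ((lin j).[t] - pattern_tensor set0 j).
  by rewrite linjE !hornerE; field.
rewrite hornerD hornerC QtE lintE e0E !big_ord_recl big_ord0 /c /v /=.
by rewrite -/(pattern_tensor R j); ring.
Qed.

Definition pattern_minor p (U V : 'I_p -> {set 'I_k}) : pexpr K (midx n) :=
  pdet (fun a b => PVar K (pattern_idx (U a :|: V b))).

(* [pattern_minor U V] is a minor of the flattening along the factors in [A]; the flattening of
   a sum of [s] decomposable tensors has rank at most [s]. *)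
Lemma pattern_minor_span s p (A : {set 'I_k}) (U V : 'I_p -> {set 'I_k}) T :
  (forall a, U a \subset A) -> (forall b, [disjoint V b & A]) ->
  in_span_of_points s T -> (s < p)%N -> peval (pattern_minor U V) T = 0.
Proof.
move=> UA VA [c [v [_ TE]]] s_lt_p; rewrite peval_pdet.
pose L := \matrix_(a, l) (c l * \prod_(i in A) v l i (pattern_idx (U a) i)).
pose Rt := \matrix_(l, b) \prod_(i | i \notin A) v l i (pattern_idx (V b) i).
have -> : \matrix_(a, b) peval (PVar K (pattern_idx (U a :|: V b))) T = L *m Rt.
  apply/matrixP => a b; rewrite !mxE /= TE; apply: eq_bigr => l _.
  rewrite !mxE -mulrA (bigID (mem A)) /=; congr (_ * (_ * _)); apply: eq_bigr => i iA.
    by rewrite !ffunE inE (disjointFl (VA b) iA) orbF.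
  by rewrite !ffunE inE (contraNF (subsetP (UA a) i) iA).
apply/eqP; apply: contraTT s_lt_p; rewrite -GRing.unitfE -unitmxE -row_free_unit -leqNgt.
move/eqP=> <-; exact: leq_trans (mxrankM_maxl _ _) (rank_leq_col _).
Qed.

Lemma not_secant2_wtensor S i1 i2 r1 r2 :
  i1 \in S -> i2 \in S -> r1 \notin S -> r2 \notin S -> i1 != i2 -> r1 != r2 ->
  ~ secant 2 (wtensor S (~: S) 0 1).
Proof.
move=> i1S i2S r1S r2S i12 r12 sec2.
pose U (a : 'I_3) := nth set0 [:: [set r1]; [set i1]; set0] a.
pose V (a : 'I_3) := nth set0 [:: ~: S :\ r1; set0; [set i2]] a.
have UA a : U a \subset [set i1; r1].
  by case: a => [[|[|[|m]]] lt3] //; rewrite /U /= ?sub0set // sub1set !inE eqxx ?orbT.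
have VA b : [disjoint V b & [set i1; r1]].
  case: b => [[|[|[|m]]] lt3] //; rewrite /V /=.
  - rewrite disjoints_subset; apply/subsetP => z; rewrite !inE negb_or => /andP[-> zS].
    by rewrite andbT; apply: contraNneq zS => ->.
  - by rewrite disjoints_subset sub0set.
  - rewrite disjoints1 !inE negb_or eq_sym i12 /=; by apply: contraNneq r1S => <-.
have SC : [disjoint S & ~: S] by rewrite disjoints_subset setCK.
have r1C : r1 \in ~: S by rewrite inE.
have r21 : (r2 == r1) = false by rewrite eq_sym (negbTE r12).
have neq_at z (A B : {set 'I_k}) : (z \in A) != (z \in B) -> A != B.
  by apply: contraNneq => ->.
have not_sub z (A : {set 'I_k}) : z \notin S -> z \in A -> ~~ ((A \subset S) && (#|A| == 1%N)).
  by move=> zS zA; rewrite negb_and; apply/orP; left; apply/subsetPn; exists z.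
have := sec2 _ (fun T spanT => pattern_minor_span UA VA spanT (ltnSn 2)).
rewrite peval_pdet (_ : \matrix_(a, b) _ = 1%:M) ?det1 => [/eqP|]; first by rewrite oner_eq0.
apply/matrixP => a b; rewrite !mxE /U /V /=.
case: a b => [[|[|[|?]]] ?] [[|[|[|?]]] ?] //=.
- by rewrite setD1K // (wtensor_idx_R _ _ SC r1C).
- rewrite setU0 wtensor_idx_eq0 //; first by apply: (neq_at r2); rewrite !inE r2S r21.
  exact: not_sub r1S (set11 r1).
- rewrite wtensor_idx_eq0 //; first by apply: (neq_at i2); rewrite !inE i2S eqxx orbT.
  by apply: (not_sub r1 _ r1S); rewrite !inE eqxx.
- rewrite wtensor_idx_eq0 //; first by apply: (neq_at i1); rewrite !inE i1S eqxx.
  by apply: (not_sub r2 _ r2S); rewrite !inE r2S r21 orbT.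
- by rewrite setU0 (wtensor_idx_set1 _ _ SC i1S).
- rewrite wtensor_idx_eq0 //; first by apply: (neq_at i1); rewrite !inE i1S eqxx.
  by rewrite cards2 i12 andbF.
- rewrite set0U wtensor_idx_eq0 //; first by apply: (neq_at r1); rewrite !inE r1S eqxx.
  by apply: (not_sub r2 _ r2S); rewrite !inE r2S r21.
- by rewrite set0U wtensor_idx_eq0 // ?cards0 ?andbF //; apply: (neq_at r1); rewrite !inE r1S.
- by rewrite set0U (wtensor_idx_set1 _ _ SC i2S).
Qed.

End Segre.

Theorem theorem2 (K : closedFieldType) (k : nat) (n : 'I_k -> nat)
    (hk : (3 <= k)%N) (hn : forall i, (0 < n i)%N) (x : nat)
    (hx : (3 <= x <= k.-1)%N) :
  exists T : tensor K n,
    (exists j, T j != 0) /\ secant 3 T /\ ~ secant 2 T /\ X_rank T x.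
Proof.
have m_le_k : (x.-1 <= k)%N by lia.
pose S := [set widen_ord m_le_k i | i : 'I_x.-1].
have memS z : (z \in S) = (z < x.-1)%N.
  apply/imsetP/idP => [[i _ ->]|z_lt]; first exact: (ltn_ord i).
  by exists (Ordinal z_lt); last apply: val_inj.
have cardS : #|S| = x.-1.
  by rewrite card_imset ?card_ord // => i i' /(congr1 val) ii'; apply: val_inj.
have [k0 k1 k2 k3] : [/\ 0 < k, 1 < k, k.-1 < k & k.-2 < k]%N by split; lia.
pose i1 := Ordinal k0; pose i2 := Ordinal k1; pose r1 := Ordinal k2; pose r2 := Ordinal k3.
have [i1S i2S r1S r2S] : [/\ i1 \in S, i2 \in S, r1 \notin S & r2 \notin S].
  by rewrite !memS /=; split; lia.
have i12 : i1 != i2 by rewrite -val_eqE.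
have r12 : r1 != r2 by rewrite -val_eqE /=; lia.
exists (wtensor S (~: S) 0 1); split.
  exists (pattern_idx n (~: S)).
  by rewrite (wtensor_idx_R _ _ _ _ (r0 := r1)) ?oner_neq0 ?inE // disjoints_subset setCK.
split; first exact: secant3_wtensor.
split; first exact: not_secant2_wtensor i1S i2S r1S r2S i12 r12.
have -> : x = #|S|.+1 by rewrite cardS; lia.
exact: X_rank_wtensor r1S.
Qed.
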